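(* Assume $FCA^\Delta$. Then there is an entangled set of reals, i.e. an uncountable $\mathcal{E}\subseteq\mathbb{R}$ which is $k$-entangled for every $k\in\omega$.
   Context: For a finite set $a$ of reals, $a(i)$ is its $i$-th element in increasing order. An uncountable $\mathcal{E}\subseteq\mathbb{R}$ is $k$-entangled if for every uncountable family $\mathcal{A}\subseteq[\mathcal{E}]^k$ of pairwise disjoint sets and every $t:k\to\{<,>\}$ there are distinct $a,b\in\mathcal{A}$ with $a(i)\ t(i)\ b(i)$ for all $i<k$. $FCA^\Delta$ is the statement: for every good type $\tau$ there is a fully $\Delta$-capturing construction scheme of type $\tau$ over $\omega_1$. Definitions: a type is a sequence $\tau=\langle m_k,n_{k+1},r_{k+1}\rangle_{k\in\omega}$ of natural numbers with $m_0=1$ and, for all $k$, $n_{k+1}\geq2$, $m_k>r_{k+1}$, $m_{k+1}=r_{k+1}+(m_k-r_{k+1})n_{k+1}$; good if every $r$ equals $r_k$ for infinitely many $k\geq1$. $A<B$ means every element of $A$ is below every element of $B$; $D(a)$ is the $a$-th element of a finite set of ordinals $D$. A construction scheme of type $\tau$ over a set of ordinals $Y$ is a family $\mathcal{F}$ of nonempty finite subsets of $Y$, cofinal among finite subsets of $Y$ under $\subseteq$, each of size $m_k$ for some $k$, with $\mathcal{F}_k=\{F\in\mathcal{F}:|F|=m_k\}$ satisfying: (i) for $E,F\in\mathcal{F}_k$, $E\cap F$ is an initial segment of both; (ii) every $F\in\mathcal{F}_{k+1}$ equals $F_0\cup\dots\cup F_{n_{k+1}-1}$ with $F_i\in\mathcal{F}_k$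 a $\Delta$-system with root $R(F)$, $|R(F)|=r_{k+1}$, $R(F)<F_0\setminus R(F)<\dots<F_{n_{k+1}-1}\setminus R(F)$. $\rho(\alpha,\beta)=\min\{k:\exists F\in\mathcal{F}_k\ \{\alpha,\beta\}\subseteq F\}$; $\lVert\alpha\rVert_k=|\{\xi<\alpha:\rho(\xi,\alpha)\leq k\}|$; $\Delta(\alpha,\beta)=\min\{k:\lVert\alpha\rVert_k\neq\lVert\beta\rVert_k\}$ ($\omega$ if none); for $k\geq1$, $\Xi_\alpha(k)=-1$ if $\alpha\in R(F)$, $=i$ if $\alpha\in F_i\setminus R(F)$, for any $F\in\mathcal{F}_k$ containing $\alpha$. A root-tail-tail $\Delta$-system is a sequence $\langle D_i\rangle_{i<n}$, $n\geq2$, of finite sets of ordinals of common size $m$ with pairwise intersections $R$, $R<D_i\setminus R$, $D_0\setminus R<\dots<D_{n-1}\setminus R$; $r=|R|$. It is fully $\Delta$-captured at level $l\geq1$ if $n=n_l$, (I) $\Xi_{D_i(a)}(l)=-1$ for $a<r$ and $=i$ for $a\geq r$ ($i<n$, $a<m$), and (II) $\Delta(D_i(a),D_j(a))=l$ for $i<j<n$, $r\leq a<m$. A scheme over $\omega_1$ is fully $\Delta$-capturing if for every uncountable family $\mathcal{S}$ of nonempty finite subsets of $\omega_1$ there are infinitely many $l$ for which some $n_l$ distinct members of $\mathcal{S}$, suitably enumerated, form a root-tail-tail $\Delta$-system fully $\Delta$-captured at level $l$. *)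

From Stdlib Require Import Reals List Sorted Lia.
Open Scope R_scope.

Definition countable {X : Type} (P : X -> Prop) : Prop :=
  exists f : X -> nat, forall x y, P x -> P y -> f x = f y -> x = y.

Definition is_omega1 (T : Type) (lt : T -> T -> Prop) : Prop :=
  (forall x, ~ lt x x) /\
  (forall x y z, lt x y -> lt y z -> lt x z) /\
  (forall x y, lt x y \/ x = y \/ lt y x) /\
  well_founded lt /\
  ~ countable (fun _ : T => True) /\
  (forall a, countable (fun x => lt x a)).

(* Types tau = <m_k, n_{k+1}, r_{k+1}>; n 0 and r 0 are unused. *)
Record typ := mkTyp { tm : nat -> nat; tn : nat -> nat; tr : nat -> nat }.

Definition is_type (t : typ) : Prop :=
  tm t 0 = 1%nat /\
  forall k, (2 <= tn t (S k))%nat /\ (tr t (S k) < tm t k)%nat /\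
            tm t (S k) = (tr t (S k) + (tm t k - tr t (S k)) * tn t (S k))%nat.

Definition good_type (t : typ) : Prop :=
  forall r N : nat, exists k, (N < k)%nat /\ tr t k = r.

Section Scheme.
Variable T : Type.
Variable lt : T -> T -> Prop.

(* finite sets of ordinals = strictly increasing lists; D(a) = nth_error D a *)
Definition fin_set (l : list T) : Prop := Sorted lt l.

Definition rtt (D : nat -> list T) (n : nat) (R : list T) : Prop :=
  (2 <= n)%nat /\ fin_set R /\
  (forall i, (i < n)%nat -> fin_set (D i)) /\
  (forall i j, (i < n)%nat -> (j < n)%nat -> length (D i) = length (D j)) /\
  (forall i j, (i < n)%nat -> (j < n)%nat -> i <> j ->
     forall x, (In x (D i) /\ In x (D j)) <-> In x R) /\
  (forall i x y, (i < n)%nat -> In x R -> In y (D i) -> ~ In y R -> lt x y) /\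
  (forall i j x y, (i < j)%nat -> (j < n)%nat ->
     In x (D i) -> ~ In x R -> In y (D j) -> ~ In y R -> lt x y).

Variable t : typ.
Variable F : list T -> Prop.

Definition level (k : nat) (E : list T) : Prop := F E /\ length E = tm t k.

Definition decomposition (k : nat) (E : list T) (Fs : nat -> list T) (R : list T) : Prop :=
  length R = tr t (S k) /\ rtt Fs (tn t (S k)) R /\
  (forall i, (i < tn t (S k))%nat -> level k (Fs i)) /\
  (forall x, In x E <-> exists i, (i < tn t (S k))%nat /\ In x (Fs i)).

Definition initseg (E E' : list T) : Prop :=
  forall x y, In x E -> In x E' -> In y E -> lt y x -> In y E'.

Definition is_scheme : Prop :=
  (forall E, F E -> E <> nil /\ fin_set E /\ exists k, length E = tm t k) /\
  (forall A, fin_set A -> exists E, F E /\ incl A E) /\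
  (forall k E E', level k E -> level k E' -> initseg E E' /\ initseg E' E) /\
  (forall k E, level (S k) E -> exists Fs R, decomposition k E Fs R).

Definition rho_le (x y : T) (k : nat) : Prop :=
  exists j, (j <= k)%nat /\ exists E, level j E /\ In x E /\ In y E.

Definition card_is (P : T -> Prop) (c : nat) : Prop :=
  exists l, NoDup l /\ length l = c /\ forall x, P x <-> In x l.

Definition norm_is (a : T) (k c : nat) : Prop :=
  card_is (fun x => lt x a /\ rho_le x a k) c.

Definition norm_eq (a b : T) (k : nat) : Prop :=
  exists c, norm_is a k c /\ norm_is b k c.

Definition Delta_is (a b : T) (l : nat) : Prop :=
  ~ norm_eq a b l /\ forall k, (k < l)%nat -> norm_eq a b k.

(* Xi_a(l) = v, with None standing for -1 and Some i for i *)
Definition Xi_class (n : nat) (Fs : nat -> list T) (R : list T) (a : T) (v : option nat) : Prop :=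
  match v with
  | None => In a R
  | Some i => (i < n)%nat /\ In a (Fs i) /\ ~ In a R
  end.

Definition Xi_is (a : T) (l : nat) (v : option nat) : Prop :=
  match l with
  | O => False
  | S k => (exists E, level (S k) E /\ In a E) /\
           forall E Fs R, level (S k) E -> In a E -> decomposition k E Fs R ->
             Xi_class (tn t (S k)) Fs R a v
  end.

(* fully Delta-captured at level l (n, r, m read off D and R) *)
Definition fully_captured (D : nat -> list T) (n : nat) (R : list T) (l : nat) : Prop :=
  (1 <= l)%nat /\ n = tn t l /\
  (forall i a x, (i < n)%nat -> (a < length (D 0%nat))%nat -> nth_error (D i) a = Some x ->
     ((a < length R)%nat -> Xi_is x l None) /\
     ((length R <= a)%nat -> Xi_is x l (Some i))) /\
  (forall i j a x y, (i < j)%nat -> (j < n)%nat ->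
     (length R <= a)%nat -> (a < length (D 0%nat))%nat ->
     nth_error (D i) a = Some x -> nth_error (D j) a = Some y -> Delta_is x y l).

Definition fully_capturing : Prop :=
  forall S : list T -> Prop,
    (forall s, S s -> s <> nil /\ fin_set s) ->
    ~ countable S ->
    forall N, exists l, (N < l)%nat /\
      exists (D : nat -> list T) (R : list T),
        (forall i, (i < tn t l)%nat -> S (D i)) /\
        (forall i j, (i < tn t l)%nat -> (j < tn t l)%nat -> D i = D j -> i = j) /\
        rtt D (tn t l) R /\
        fully_captured D (tn t l) R l.

End Scheme.

Definition FCA_Delta (T : Type) (lt : T -> T -> Prop) : Prop :=
  forall t : typ, is_type t -> good_type t ->
    exists F : list T -> Prop, is_scheme T lt t F /\ fully_capturing T lt t F.

(* entangled sets of reals; [E]^k = strictly increasing k-lists from E *)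
Definition k_subset (E : R -> Prop) (k : nat) (a : list R) : Prop :=
  Sorted Rlt a /\ length a = k /\ forall x, In x a -> E x.

Definition k_entangled (E : R -> Prop) (k : nat) : Prop :=
  ~ countable E /\
  forall A : list R -> Prop,
    (forall a, A a -> k_subset E k a) ->
    (forall a b, A a -> A b -> a <> b -> forall x, In x a -> ~ In x b) ->
    ~ countable A ->
    forall tt : nat -> bool,
      exists a b, A a /\ A b /\ a <> b /\
        forall i x y, (i < k)%nat -> nth_error a i = Some x -> nth_error b i = Some y ->
          (if tt i then x < y else x > y).

Definition entangled (E : R -> Prop) : Prop :=
  ~ countable E /\ forall k, k_entangled E k.

From Stdlib Require Import Reals List Sorted Lia Arith Lra ClassicalEpsilon Classical Cantor.

(* Take the good type with r_(k+1) enumerating every value infinitely often and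
   n_(k+1) = 2^(m_k + 1), and a fully Δ-capturing scheme over ω₁.  Code each
   ordinal a by the real whose (k+1)-st digit in a suitable mixed radix is the
   pair (ε, ||a||_(k+1)), where ε is Ξ_a(k+1) or n_(k+1) - Ξ_a(k+1) according
   to bit ||a||_k of Ξ_a(k+1)/2.  The first level where two ordinals differ is
   one where their norms differ, so the coding is injective.

   Given an uncountable disjoint family of k-sets of codes, refine it to an
   uncountable family whose preimages lie in one level-L set and have the same
   order pattern (how the order of ω₁ permutes the order of the reals), and
   capture n_l of them at a level l > L.  Elements in the same position q agree
   below level l, have Ξ-values equal to their index, and have norms P_q at
   level l - 1 which are distinct for distinct q.  Choosing u < 2^(m_(l-1))
   whose bit P_q prescribes the desired comparison at position q, the captured
   members 2u and 2u + 1 realize any comparison pattern. *)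

Local Open Scope nat_scope.

Section FiniteCardinality.
Context {X : Type}.

Lemma card_is_unique (P : X -> Prop) c d : card_is X P c -> card_is X P d -> c = d.
Proof.
  intros [l1 [N1 [<- H1]]] [l2 [N2 [<- H2]]].
  apply Nat.le_antisymm; apply NoDup_incl_length; auto;
    intros x Hx; [apply H2, H1 | apply H1, H2]; exact Hx.
Qed.

Lemma card_is_ext (P Q : X -> Prop) c :
  (forall x, P x <-> Q x) -> card_is X P c -> card_is X Q c.
Proof.
  intros E [l [N [L H]]]. exists l. split; [auto|split; [auto|]]. intro x. rewrite <- E. apply H.
Qed.

Lemma card_is_or (P Q : X -> Prop) c d : card_is X P c -> card_is X Q d ->
  (forall x, P x -> Q x -> False) -> card_is X (fun x => P x \/ Q x) (c + d).
Proof.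
  intros [l1 [N1 [L1 H1]]] [l2 [N2 [L2 H2]]] D.
  exists (l1 ++ l2). split; [|split].
  - apply NoDup_app; auto. intros a Ha Hb. apply (D a); [apply H1|apply H2]; auto.
  - rewrite length_app. lia.
  - intro x. rewrite in_app_iff, H1, H2. tauto.
Qed.

Lemma card_is_In (l : list X) : NoDup l -> card_is X (fun x => In x l) (length l).
Proof. intro N. exists l. split; [auto|split; [auto|tauto]]. Qed.

Lemma card_is_False : card_is X (fun _ => False) 0.
Proof. apply (card_is_ext (fun x => In x nil)); [tauto|]. apply card_is_In. constructor. Qed.

Lemma card_is_exists (P : X -> Prop) (l : list X) :
  NoDup l -> (forall x, P x -> In x l) -> exists c, card_is X P c.
Proof.
  intros N H.
  set (f := fun x => if excluded_middle_informative (P x) then true else false).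
  exists (length (filter f l)). exists (filter f l). repeat split.
  - apply NoDup_filter; auto.
  - intro Px. apply filter_In. unfold f. destruct (excluded_middle_informative (P x)); auto; contradiction.
  - intro Hx. apply filter_In in Hx as [_ Hx]. unfold f in Hx.
    destruct (excluded_middle_informative (P x)); [assumption|discriminate].
Qed.

Lemma card_is_lt (P Q : X -> Prop) c d z : card_is X P c -> card_is X Q d ->
  (forall x, P x -> Q x) -> Q z -> ~ P z -> c < d.
Proof.
  intros [l1 [N1 [<- H1]]] [l2 [N2 [<- H2]]] PQ Qz Pz.
  change (length (z :: l1) <= length l2). apply NoDup_incl_length.
  - constructor; auto. intro I. apply Pz, H1, I.
  - intros x [<-|Hx]; apply H2; auto. apply PQ, H1, Hx.
Qed.

End FiniteCardinality.

Section StrictOrder.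
Context {T : Type} (lt : T -> T -> Prop).
Hypothesis lt_irrefl : forall x, ~ lt x x.
Hypothesis lt_trans : forall x y z, lt x y -> lt y z -> lt x z.

Lemma lt_asym x y : lt x y -> lt y x -> False.
Proof. intros; apply (lt_irrefl x); eauto. Qed.

Lemma sorted_strongly l : Sorted lt l -> StronglySorted lt l.
Proof. apply Sorted_StronglySorted. exact lt_trans. Qed.

Lemma sorted_NoDup l : Sorted lt l -> NoDup l.
Proof.
  intro Hl. apply sorted_strongly in Hl. induction Hl as [|a l _ IH Ha]; constructor; auto.
  intro I. rewrite Forall_forall in Ha. apply (lt_irrefl a), Ha, I.
Qed.

Lemma strongly_sorted_ext l1 : StronglySorted lt l1 -> forall l2, StronglySorted lt l2 ->
  (forall x, In x l1 <-> In x l2) -> l1 = l2.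
Proof.
  induction 1 as [|a l1 S1 IH F1]; intros l2 S2 E.
  - destruct l2 as [|b l2]; auto. exfalso. apply (E b). left; auto.
  - destruct S2 as [|b l2 S2 F2]; [exfalso; apply (E a); left; auto|].
    rewrite Forall_forall in F1, F2.
    assert (a = b) as <-.
    { destruct (proj1 (E a) (or_introl eq_refl)) as [->|Ha]; auto.
      destruct (proj2 (E b) (or_introl eq_refl)) as [->|Hb]; auto.
      exfalso. apply (lt_asym a b); auto. }
    f_equal. apply IH; auto.
    intro x; split; intro Hx.
    + destruct (proj1 (E x) (or_intror Hx)) as [<-|]; auto. exfalso; apply (lt_irrefl a); auto.
    + destruct (proj2 (E x) (or_intror Hx)) as [<-|]; auto. exfalso; apply (lt_irrefl a); auto.
Qed.

Lemma sorted_ext l1 l2 : Sorted lt l1 -> Sorted lt l2 ->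
  (forall x, In x l1 <-> In x l2) -> l1 = l2.
Proof. intros; apply strongly_sorted_ext; try apply sorted_strongly; auto. Qed.

Lemma sorted_nth_error_lt l : Sorted lt l -> forall i j x y, i < j ->
  nth_error l i = Some x -> nth_error l j = Some y -> lt x y.
Proof.
  intro Hl. apply sorted_strongly in Hl. induction Hl as [|a l _ IH F]; intros i j x y ij Hi Hj.
  - destruct i; discriminate.
  - rewrite Forall_forall in F. destruct j as [|j]; [lia|].
    destruct i as [|i]; simpl in Hi, Hj.
    + injection Hi as <-. apply F. eapply nth_error_In; eauto.
    + apply (IH i j); auto. lia.
Qed.

Hypothesis lt_total : forall x y, lt x y \/ x = y \/ lt y x.

Lemma sorted_exists (l : list T) : exists s, Sorted lt s /\ forall x, In x s <-> In x l.
Proof.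
  induction l as [|a l [s [Ss Es]]].
  - exists nil. split; [constructor|]. simpl; tauto.
  - enough (exists s', StronglySorted lt s' /\ forall y, In y s' <-> y = a \/ In y s)
      as [s' [S' E']].
    { exists s'. split; [apply StronglySorted_Sorted; auto|].
      intro x. rewrite E', Es. simpl. intuition. }
    clear Es. apply sorted_strongly in Ss. induction Ss as [|b s Ss IH F].
    + exists (a :: nil). split; [repeat constructor|]. simpl. intuition.
    + rewrite Forall_forall in F.
      destruct (lt_total a b) as [ab|[<-|ba]].
      * exists (a :: b :: s). split; [|simpl; intuition].
        constructor; [constructor; auto; rewrite Forall_forall; auto|].
        rewrite Forall_forall. intros x [<-|Hx]; eauto.
      * exists (a :: s). split; [constructor; auto; rewrite Forall_forall; auto|simpl; intuition].
      * destruct IH as [s' [S' E']].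
        exists (b :: s'). split.
        -- constructor; auto. rewrite Forall_forall. intros x Hx.
           apply E' in Hx as [->|Hx]; auto.
        -- intro y. simpl. rewrite E'. intuition.
Qed.

End StrictOrder.

Section SchemeNorms.
Context {T : Type} (lt : T -> T -> Prop).
Hypothesis lt_irrefl : forall x, ~ lt x x.
Hypothesis lt_trans : forall x y z, lt x y -> lt y z -> lt x z.
Variable t : typ.
Variable F : list T -> Prop.
Hypothesis HF : is_scheme T lt t F.

Notation lev := (level T t F).

Lemma level_NoDup k E : lev k E -> NoDup E.
Proof.
  intros [FE _]. apply (sorted_NoDup lt lt_irrefl lt_trans). apply (proj1 HF E FE).
Qed.

Lemma level_split k E : lev (S k) E -> exists Fs R, decomposition T lt t F k E Fs R.
Proof. apply (proj2 (proj2 (proj2 HF))). Qed.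

Lemma decomposition_In k E Fs R i x : decomposition T lt t F k E Fs R ->
  i < tn t (S k) -> In x (Fs i) -> In x E.
Proof. intros [_ [_ [_ M]]] Hi Hx. apply M. eauto. Qed.

Lemma rtt_root_In D n R i x : rtt T lt D n R -> i < n -> In x R -> In x (D i).
Proof.
  intros [n2 [_ [_ [_ [I _]]]]] Hi Hx.
  destruct i as [|i]; [apply (I 0 1) | apply (I (S i) 0)]; auto; lia.
Qed.

Lemma level_down L K E a : L <= K -> lev K E -> In a E -> exists E', lev L E' /\ In a E'.
Proof.
  intro LK. replace K with (L + (K - L)) by lia. generalize (K - L) as d. clear K LK.
  intro d. revert E. induction d as [|d IH]; intros E HE Ha.
  - rewrite Nat.add_0_r in HE. eauto.
  - rewrite Nat.add_succ_r in HE.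
    destruct (level_split _ _ HE) as [Fs [R [_ [_ [Hl M]]]]].
    destruct (proj1 (M a) Ha) as [i [Hi Hai]]. eapply IH; eauto.
Qed.

Lemma level_initial_segment L K G E g y : L <= K -> lev L G -> lev K E ->
  In g G -> In g E -> In y G -> lt y g -> In y E.
Proof.
  intro LK. replace K with (L + (K - L)) by lia. generalize (K - L) as d. clear K LK.
  intro d. revert E. induction d as [|d IH]; intros E HG HE HgG HgE Hy Hyg.
  - rewrite Nat.add_0_r in HE.
    apply (proj1 (proj1 (proj2 (proj2 HF)) L G E HG HE) g y); auto.
  - rewrite Nat.add_succ_r in HE.
    destruct (level_split _ _ HE) as [Fs [R D]]. pose proof D as [_ [_ [Hl M]]].
    destruct (proj1 (M g) HgE) as [i [Hi Hgi]].
    apply (decomposition_In _ _ _ _ i _ D Hi). eapply IH; eauto.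
Qed.

Definition norm_at (a : T) (k : nat) : nat := epsilon (inhabits 0) (norm_is T lt t F a k).

Lemma norm_is_in_level K E a c : lev K E -> In a E ->
  (norm_is T lt t F a K c <-> card_is T (fun x => In x E /\ lt x a) c).
Proof.
  intros HE Ha.
  assert (Eq : forall x, (lt x a /\ rho_le T t F x a K) <-> (In x E /\ lt x a)).
  { intro x. split.
    - intros [xa [j [jK [G [HG [Hx Ha']]]]]]. split; auto.
      apply (level_initial_segment j K G E a x); auto.
    - intros [Hx xa]. split; auto. exists K. split; [lia|]. exists E. auto. }
  split; apply card_is_ext; intro x; [|symmetry]; apply Eq.
Qed.

Lemma card_below K E a : lev K E -> exists c, card_is T (fun x => In x E /\ lt x a) c.
Proof. intro HE. apply (card_is_exists _ E); [eapply level_NoDup; eauto | tauto]. Qed.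

Lemma norm_at_spec K E a c : lev K E -> In a E ->
  card_is T (fun x => In x E /\ lt x a) c -> norm_at a K = c.
Proof.
  intros HE Ha Hc. apply (norm_is_in_level K E a c HE Ha) in Hc.
  apply (card_is_unique (fun x => lt x a /\ rho_le T t F x a K)); auto.
  exact (epsilon_spec (inhabits 0) (norm_is T lt t F a K) (ex_intro _ c Hc)).
Qed.

Lemma norm_at_eq a b k : norm_eq T lt t F a b k -> norm_at a k = norm_at b k.
Proof.
  intros [c [Ha Hb]]. unfold norm_at.
  pose proof (epsilon_spec (inhabits 0) (norm_is T lt t F a k) (ex_intro _ c Ha)) as H1.
  pose proof (epsilon_spec (inhabits 0) (norm_is T lt t F b k) (ex_intro _ c Hb)) as H2.
  rewrite (card_is_unique _ _ _ H1 Ha), (card_is_unique _ _ _ H2 Hb). reflexivity.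
Qed.

Lemma norm_at_lt_size K E a : lev K E -> In a E -> norm_at a K < tm t K.
Proof.
  intros HE Ha. destruct (card_below K E a HE) as [c Hc].
  rewrite (norm_at_spec K E a c HE Ha Hc).
  pose proof (level_NoDup K E HE) as N. destruct HE as [_ <-].
  apply (card_is_lt _ _ _ _ a Hc (card_is_In E N)); [tauto | exact Ha |].
  intros [_ aa]. apply (lt_irrefl a aa).
Qed.

Lemma norm_at_lt K E a b : lev K E -> In a E -> In b E -> lt a b -> norm_at a K < norm_at b K.
Proof.
  intros HE Ha Hb ab.
  destruct (card_below K E a HE) as [c Hc]. destruct (card_below K E b HE) as [d Hd].
  rewrite (norm_at_spec K E a c HE Ha Hc), (norm_at_spec K E b d HE Hb Hd).
  apply (card_is_lt _ _ _ _ a Hc Hd).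
  - intros x [Hx xa]. split; eauto.
  - split; auto.
  - intros [_ aa]. apply (lt_irrefl a aa).
Qed.

Lemma norm_at_0 E a : tm t 0 = 1 -> lev 0 E -> In a E -> norm_at a 0 = 0.
Proof.
  intros H0 HE Ha. apply (norm_at_spec 0 E a 0 HE Ha).
  destruct HE as [_ HL]. rewrite H0 in HL.
  destruct E as [|b [|c E]]; try discriminate. destruct Ha as [<-|[]].
  apply (card_is_ext (fun _ => False)); [|apply card_is_False].
  intro x; simpl. split; [tauto|]. intros [[<-|[]] aa]. apply (lt_irrefl _ aa).
Qed.

Section Decomposition.
Variables (k : nat) (E : list T) (Fs : nat -> list T) (R : list T).
Hypothesis HD : decomposition T lt t F k E Fs R.

Lemma decomposition_tail_card j : j < tn t (S k) ->
  card_is T (fun x => In x (Fs j) /\ ~ In x R) (tm t k - tr t (S k)).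
Proof.
  intro Hj. destruct HD as [HR [Hrtt [Hl _]]]. pose proof Hrtt as [_ [sR _]].
  destruct (card_is_exists (fun x => In x (Fs j) /\ ~ In x R) (Fs j)) as [c Hc];
    [eapply level_NoDup; eauto | tauto |].
  assert (Ht : card_is T (fun x => In x (Fs j)) (length R + c)).
  { apply (card_is_ext (fun x => In x R \/ (In x (Fs j) /\ ~ In x R))).
    - intro x. split.
      + intros [H|[H _]]; auto. eapply rtt_root_In; eauto.
      + intro H. destruct (classic (In x R)); auto.
    - apply card_is_or; [apply card_is_In, (sorted_NoDup lt); auto | exact Hc | tauto]. }
  destruct (Hl j Hj) as [_ L].
  pose proof (card_is_unique _ _ _ Ht (card_is_In _ (level_NoDup _ _ (Hl j Hj)))).
  replace (tm t k - tr t (S k)) with c by lia. exact Hc.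
Qed.

Lemma decomposition_tails_card i : i <= tn t (S k) ->
  card_is T (fun x => exists j, j < i /\ In x (Fs j) /\ ~ In x R) (i * (tm t k - tr t (S k))).
Proof.
  destruct HD as [_ [[_ [_ [_ [_ [I _]]]]] _]].
  induction i as [|i IH]; intro Hi.
  - apply (card_is_ext (fun _ => False)); [|apply card_is_False].
    intro x; split; [tauto|]. intros [j [Hj _]]; lia.
  - rewrite Nat.mul_succ_l.
    eapply card_is_ext; [|apply card_is_or; [apply IH; lia | apply (decomposition_tail_card i); lia |]].
    + intro x. split.
      * intros [[j [Hj Hx]]|Hx]; [exists j; split; [lia|auto] | exists i; split; [lia|auto]].
      * intros [j [Hj Hx]]. destruct (Nat.eq_dec j i) as [->|]; auto.
        left. exists j. split; auto. lia.
    + intros x [j [Hj [Hx1 Hx2]]] [Hx3 _]. apply Hx2. apply (I j i); auto; lia.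
Qed.

(* Inside a member [E] of level [S k], the elements below [a ∈ Fs i \ R] are
   those of [Fs i] below [a] together with the tails of [Fs 0], ..., [Fs (i-1)]. *)
Lemma decomposition_below_card i a c : i < tn t (S k) -> In a (Fs i) -> ~ In a R ->
  card_is T (fun x => In x (Fs i) /\ lt x a) c ->
  card_is T (fun x => In x E /\ lt x a) (c + i * (tm t k - tr t (S k))).
Proof.
  intros Hi Ha HaR Hc. pose proof HD as [_ [Hrtt [_ M]]].
  pose proof Hrtt as [_ [_ [_ [_ [I [_ Ord]]]]]].
  eapply card_is_ext; [|apply card_is_or; [exact Hc | apply (decomposition_tails_card i); lia |]].
  - intro x. split.
    + intros [[Hx xa]|[j [Hj [Hx1 Hx2]]]].
      * split; auto. apply (decomposition_In _ _ _ _ i _ HD Hi Hx).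
      * split; [apply (decomposition_In _ _ _ _ j _ HD); [lia|auto] | apply (Ord j i); auto].
    + intros [Hx xa]. destruct (proj1 (M x) Hx) as [j [Hj Hxj]].
      destruct (classic (In x R)) as [HxR|HxR].
      * left. split; [eapply rtt_root_In; eauto | auto].
      * destruct (Nat.lt_total j i) as [ji|[->|ij]]; [right; exists j; auto | left; auto |].
        exfalso. apply (lt_asym lt lt_irrefl lt_trans a x); auto. apply (Ord i j); auto.
  - intros x [Hx1 _] [j [Hj [Hx2 Hx3]]]. apply Hx3. apply (I j i); auto; lia.
Qed.

End Decomposition.

Lemma Xi_in_level l a v k : Xi_is T lt t F a (S l) v -> k <= S l ->
  exists E, lev k E /\ In a E.
Proof. intros [[E [HE Ha]] _] Hk. exact (level_down k (S l) E a Hk HE Ha). Qed.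

Lemma norm_at_Xi l a i : Xi_is T lt t F a (S l) (Some i) ->
  i < tn t (S l) /\ norm_at a (S l) = norm_at a l + i * (tm t l - tr t (S l)).
Proof.
  intros [[E [HE Ha]] HX].
  destruct (level_split l E HE) as [Fs [R D]].
  destruct (HX E Fs R HE Ha D) as [Hi [HaF HaR]].
  pose proof D as [_ [_ [Hl _]]].
  destruct (card_below l (Fs i) a (Hl i Hi)) as [c Hc].
  split; [exact Hi|].
  rewrite (norm_at_spec _ _ _ _ HE Ha (decomposition_below_card l E Fs R D i a c Hi HaF HaR Hc)).
  rewrite (norm_at_spec _ _ _ _ (Hl i Hi) HaF Hc). reflexivity.
Qed.

End SchemeNorms.

Section MixedRadix.
Local Open Scope R_scope.
Variable B : nat -> nat.

(* Position [k] holds a digit in [0, B k] and has radix [4 (B k + 1)]; the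
   factor 4 keeps every tail below half a unit of the preceding position. *)
Fixpoint radix_weight (k : nat) : nat :=
  match k with O => 1%nat | S k => (radix_weight k * (4 * S (B k)))%nat end.

Definition clip (e : nat -> nat) (k : nat) : nat := Nat.min (e k) (B k).

Fixpoint partial_sum (e : nat -> nat) (N : nat) : R :=
  match N with
  | O => 0
  | S N => partial_sum e N + INR (clip e N) / INR (radix_weight (S N))
  end.

Lemma radix_weight_pos k : 0 < INR (radix_weight k).
Proof. apply lt_0_INR. induction k; simpl; [lia|]. apply Nat.mul_pos_pos; lia. Qed.

Lemma half_inv_weight_pos k : 0 < 1 / (2 * INR (radix_weight k)).
Proof.
  unfold Rdiv. rewrite Rmult_1_l. apply Rinv_0_lt_compat.
  pose proof (radix_weight_pos k). lra.
Qed.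

Lemma partial_sum_step_bound e N : INR (clip e N) / INR (radix_weight (S N)) <=
  1 / (2 * INR (radix_weight N)) - 1 / (2 * INR (radix_weight (S N))).
Proof.
  change (radix_weight (S N)) with (radix_weight N * (4 * S (B N)))%nat. rewrite !mult_INR.
  pose proof (radix_weight_pos N) as Hw. set (w := INR (radix_weight N)) in *.
  assert (Hb : 1 <= INR (S (B N))) by (rewrite S_INR; pose proof (pos_INR (B N)); lra).
  set (b := INR (S (B N))) in *.
  assert (Hc : INR (clip e N) <= b - 1).
  { unfold b. rewrite S_INR.
    assert (INR (clip e N) <= INR (B N)) by (apply le_INR; unfold clip; lia). lra. }
  set (c := INR (clip e N)) in *.
  replace (INR 4) with 4 by (simpl; lra).
  assert (Eq : 1 / (2 * w) - 1 / (2 * (w * (4 * b))) - c / (w * (4 * b))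
               = (4 * b - 1 - 2 * c) / (8 * w * b)) by (field; lra).
  assert (0 <= (4 * b - 1 - 2 * c) / (8 * w * b)).
  { apply Rmult_le_pos; [lra|]. left. apply Rinv_0_lt_compat, Rmult_lt_0_compat; lra. }
  lra.
Qed.

Lemma partial_sum_tail e a N : (a <= N)%nat ->
  partial_sum e N - partial_sum e a <=
  1 / (2 * INR (radix_weight a)) - 1 / (2 * INR (radix_weight N)).
Proof.
  induction 1; [lra|]. cbn [partial_sum]. pose proof (partial_sum_step_bound e m). lra.
Qed.

Lemma partial_sum_mono e a N : (a <= N)%nat -> partial_sum e a <= partial_sum e N.
Proof.
  induction 1; [lra|]. cbn [partial_sum].
  assert (0 <= INR (clip e m) / INR (radix_weight (S m))).
  { apply Rmult_le_pos; [apply pos_INR|]. left. apply Rinv_0_lt_compat, radix_weight_pos. }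
  lra.
Qed.

Lemma partial_sum_bounded e : bound (fun x => exists N, x = partial_sum e N).
Proof.
  exists 1. intros x [N ->].
  pose proof (partial_sum_tail e 0 N (Nat.le_0_l N)) as H. simpl in H.
  pose proof (half_inv_weight_pos N). lra.
Qed.

Definition series_value (e : nat -> nat) : R :=
  proj1_sig (completeness _ (partial_sum_bounded e) (ex_intro _ 0 (ex_intro _ 0%nat eq_refl))).

Lemma series_value_lub e :
  is_lub (fun x => exists N, x = partial_sum e N) (series_value e).
Proof. unfold series_value. apply proj2_sig. Qed.

Lemma series_value_lt e e' l : (forall k, (k < l)%nat -> clip e k = clip e' k) ->
  (clip e l < clip e' l)%nat -> series_value e < series_value e'.
Proof.
  intros Agree Lt.
  assert (Prefix : forall N, (N <= l)%nat -> partial_sum e N = partial_sum e' N).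
  { induction N; intro HN; simpl; auto. rewrite IHN, Agree by lia. reflexivity. }
  assert (Ub : series_value e <= partial_sum e (S l) + 1 / (2 * INR (radix_weight (S l)))).
  { apply (proj2 (series_value_lub e)). intros x [N ->].
    pose proof (half_inv_weight_pos (S l)). destruct (le_lt_dec N (S l)) as [h|h].
    - pose proof (partial_sum_mono e N (S l) h). lra.
    - pose proof (partial_sum_tail e (S l) N ltac:(lia)). pose proof (half_inv_weight_pos N). lra. }
  assert (Lb : partial_sum e' (S l) <= series_value e').
  { apply (proj1 (series_value_lub e')). exists (S l). reflexivity. }
  cbn [partial_sum] in Ub, Lb. rewrite Prefix in Ub by lia.
  assert (Hc : INR (clip e l) + 1 <= INR (clip e' l)) by (rewrite <- S_INR; apply le_INR; lia).
  pose proof (radix_weight_pos (S l)) as Hw.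
  set (w := INR (radix_weight (S l))) in *.
  set (c := INR (clip e l)) in *. set (c' := INR (clip e' l)) in *.
  assert (c' / w - c / w - 1 / (2 * w) = (c' - c - 1/2) / w) by (field; lra).
  assert (0 < (c' - c - 1/2) / w) by (apply Rmult_lt_0_compat; [lra | apply Rinv_0_lt_compat; lra]).
  lra.
Qed.

End MixedRadix.

Definition sqrt_rem (k : nat) : nat := k - Nat.sqrt k * Nat.sqrt k.

Fixpoint tau_m (k : nat) : nat :=
  match k with O => 1 | S k => sqrt_rem k + (tau_m k - sqrt_rem k) * (2 * 2 ^ tau_m k) end.

(* [n_(k+1) = 2^(m_k + 1)] leaves room for a bit string of length [m_k] in
   [Ξ / 2]; [r_(k+1) = sqrt_rem k] runs through every value infinitely often. *)
Definition tau : typ :=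
  mkTyp tau_m (fun k => match k with O => 2 | S k => 2 * 2 ^ tau_m k end)
        (fun k => match k with O => 0 | S k => sqrt_rem k end).

Lemma sqrt_rem_le k : sqrt_rem k <= k.
Proof. unfold sqrt_rem. lia. Qed.

Lemma tau_m_gt k : k < tau_m k.
Proof.
  induction k; simpl; [lia|].
  pose proof (sqrt_rem_le k). pose proof (Nat.pow_nonzero 2 (tau_m k) ltac:(lia)).
  nia.
Qed.

Lemma tau_type : is_type tau.
Proof.
  split; [reflexivity|]. intro k. simpl.
  pose proof (Nat.pow_nonzero 2 (tau_m k) ltac:(lia)).
  pose proof (tau_m_gt k). pose proof (sqrt_rem_le k). repeat split; lia.
Qed.

Lemma tau_good : good_type tau.
Proof.
  intros r N. set (s := N + r + 1). exists (S (s * s + r)). split; [nia|].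
  simpl. unfold sqrt_rem. rewrite (Nat.sqrt_unique (s * s + r) s); [lia|]. unfold s; nia.
Qed.

Lemma testbit_code_exists m (P : nat -> Prop) : exists u, u < 2 ^ m /\
  forall x, x < m -> (Nat.testbit u x = true <-> P x).
Proof.
  revert P. induction m as [|m IH]; intro P.
  - exists 0. split; [simpl; lia|]. intros; lia.
  - destruct (IH (fun x => P (S x))) as [u [Hu Hb]].
    destruct (classic (P 0)) as [H0|H0]; [exists (2 * u + 1) | exists (2 * u)];
      (split; [rewrite Nat.pow_succ_r'; lia|]); intros [|x] Hx.
    + rewrite Nat.testbit_odd_0. tauto.
    + rewrite Nat.testbit_odd_succ'. apply Hb. lia.
    + rewrite Nat.testbit_even_0. split; [discriminate|tauto].
    + rewrite Nat.testbit_even_succ'. apply Hb. lia.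
Qed.

Lemma uncountable_fiber {X : Type} (S : X -> Prop) (g : X -> nat) : ~ countable S ->
  exists c, ~ countable (fun s => S s /\ g s = c).
Proof.
  intro NC. apply NNPP. intro H. apply NC.
  assert (Hc : forall c, countable (fun s => S s /\ g s = c)).
  { intro c. apply NNPP. intro H'. apply H. exists c. exact H'. }
  set (fc := fun c => epsilon (inhabits (fun _ : X => 0))
     (fun f : X -> nat => forall x y, S x /\ g x = c -> S y /\ g y = c -> f x = f y -> x = y)).
  exists (fun s => Cantor.to_nat (g s, fc (g s) s)).
  intros x y Sx Sy E.
  apply (f_equal Cantor.of_nat) in E. rewrite !Cantor.cancel_of_to in E.
  injection E as E1 E2. rewrite <- E1 in E2.
  exact (epsilon_spec _ _ (Hc (g x)) x y (conj Sx eq_refl) (conj Sy (eq_sym E1)) E2).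
Qed.

Lemma least_witness (P : nat -> Prop) n : P n -> exists l, P l /\ forall k, k < l -> ~ P k.
Proof.
  revert P. induction n as [n IH] using (well_founded_induction lt_wf). intros P Pn.
  destruct (classic (exists k, k < n /\ P k)) as [[k [kn Pk]]|H].
  - apply (IH k kn P Pk).
  - exists n. split; auto. intros k kn Pk. apply H; eauto.
Qed.

Section Coding.
Context {T : Type} (lt : T -> T -> Prop).
Hypothesis lt_irrefl : forall x, ~ lt x x.
Hypothesis lt_trans : forall x y z, lt x y -> lt y z -> lt x z.
Hypothesis lt_total : forall x y, lt x y \/ x = y \/ lt y x.
Variable F : list T -> Prop.
Hypothesis HF : is_scheme T lt tau F.

Notation lev := (level T tau F).
Notation norm_at := (norm_at lt tau F).

Lemma level_cover (l : list T) : exists K G, lev K G /\ incl l G.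
Proof.
  destruct (sorted_exists lt lt_trans lt_total l) as [s [Ss Es]].
  destruct HF as [Hsize [Hcof _]]. destruct (Hcof s Ss) as [G [FG Inc]].
  destruct (Hsize G FG) as [_ [_ [K HK]]].
  exists K, G. split; [split; auto|]. intros x Hx. apply Inc, Es, Hx.
Qed.

(* The side of a level-[S k] block is reflected according to bit [p] of
   [i / 2]; blocks [2u] and [2u + 1] thus compare either way, as [u] dictates. *)
Definition orient (i p n : nat) : nat := if Nat.testbit (i / 2) p then i else n - i.

Lemma orient_pair u p n : 2 * u + 1 < n ->
  if Nat.testbit u p then orient (2 * u) p n < orient (2 * u + 1) p n
  else orient (2 * u + 1) p n < orient (2 * u) p n.
Proof.
  intro Hn. unfold orient.
  replace ((2 * u) / 2) with u by (rewrite Nat.mul_comm, Nat.div_mul; lia).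
  replace ((2 * u + 1) / 2) with u by (rewrite Nat.mul_comm, Nat.div_add_l; simpl; lia).
  destruct (Nat.testbit u p); lia.
Qed.

(* [Ξ_a(k+1)] is read off the norms (see [norm_at_Xi]). *)
Definition digit (a : T) (k : nat) : nat :=
  match k with
  | O => 0
  | S k => tm tau (S k) *
             orient ((norm_at a (S k) - norm_at a k) / (tm tau k - tr tau (S k)))
                    (norm_at a k) (tn tau (S k))
           + norm_at a (S k)
  end.

Definition digit_bound (k : nat) : nat :=
  match k with O => 0 | S k => tm tau (S k) * (tm tau (S k) + tn tau (S k) + 1) end.

Definition code (a : T) : R := series_value digit_bound (digit a).

Lemma clip_digit a k : norm_at a (S k) < tm tau (S k) ->
  clip digit_bound (digit a) (S k) = digit a (S k).
Proof.
  intro H. unfold clip. apply Nat.min_l. cbn [digit digit_bound].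
  set (q := norm_at a (S k)) in *. set (p := norm_at a k).
  set (i := (q - p) / (tm tau k - tr tau (S k))).
  assert (i <= q).
  { unfold i. destruct (tm tau k - tr tau (S k)) as [|d]; [rewrite Nat.div_0_r; lia|].
    apply Nat.Div0.div_le_upper_bound. nia. }
  assert (orient i p (tn tau (S k)) <= q + tn tau (S k))
    by (unfold orient; destruct (Nat.testbit (i / 2) p); lia).
  nia.
Qed.

Lemma clip_digit_agree a b l : (forall k, k < l -> norm_at a k = norm_at b k) ->
  forall k, k < l -> clip digit_bound (digit a) k = clip digit_bound (digit b) k.
Proof.
  intros H [|k] Hk; unfold clip; [reflexivity|]. cbn [digit]. rewrite !H by lia. reflexivity.
Qed.

Lemma code_lt_of_digit_lt a b l : (forall k, k <= l -> norm_at a k = norm_at b k) ->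
  norm_at a (S l) < tm tau (S l) -> norm_at b (S l) < tm tau (S l) ->
  digit a (S l) < digit b (S l) -> (code a < code b)%R.
Proof.
  intros Below Ha Hb Lt. apply (series_value_lt _ _ _ (S l)).
  - apply clip_digit_agree. intros k Hk. apply Below. lia.
  - rewrite (clip_digit a l Ha), (clip_digit b l Hb). exact Lt.
Qed.

Lemma digit_Xi a l i : Xi_is T lt tau F a (S l) (Some i) ->
  digit a (S l) = tm tau (S l) * orient i (norm_at a l) (tn tau (S l)) + norm_at a (S l).
Proof.
  intro X. destruct (norm_at_Xi lt lt_irrefl lt_trans tau F HF l a i X) as [_ E].
  enough (Hi : (norm_at a (S l) - norm_at a l) / (tm tau l - tr tau (S l)) = i)
    by (cbn [digit]; rewrite Hi; reflexivity).
  rewrite E, Nat.add_comm, Nat.add_sub, Nat.div_mul; [reflexivity|].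
  destruct (proj2 tau_type l) as [_ [Hr _]]. lia.
Qed.

Lemma norm_at_level_lt a K E : lev K E -> In a E -> forall k, k <= K -> norm_at a k < tm tau k.
Proof.
  intros HE Ha k Hk. destruct (level_down lt tau F HF k K E a Hk HE Ha) as [E' [HE' Ha']].
  exact (norm_at_lt_size lt lt_irrefl lt_trans tau F HF k E' a HE' Ha').
Qed.

Lemma code_inj a b : code a = code b -> a = b.
Proof.
  intro E. apply NNPP. intro ne.
  destruct (level_cover (a :: b :: nil)) as [K [G [HG Inc]]].
  assert (Ha : In a G) by (apply Inc; simpl; auto).
  assert (Hb : In b G) by (apply Inc; simpl; auto).
  assert (Hne : norm_at a K <> norm_at b K).
  { destruct (lt_total a b) as [ab|[ab|ba]]; [|contradiction|].
    - pose proof (norm_at_lt lt lt_irrefl lt_trans tau F HF K G a b HG Ha Hb ab). lia.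
    - pose proof (norm_at_lt lt lt_irrefl lt_trans tau F HF K G b a HG Hb Ha ba). lia. }
  destruct (least_witness (fun l => norm_at a l <> norm_at b l) K Hne) as [l [Hl Hmin]].
  assert (lK : l <= K) by (destruct (le_lt_dec l K); auto; exfalso; apply (Hmin K); auto).
  assert (Below : forall k, k < l -> norm_at a k = norm_at b k)
    by (intros k Hk; apply NNPP, Hmin, Hk).
  destruct l as [|l].
  - destruct (level_down lt tau F HF 0 K G a lK HG Ha) as [Ea [HEa Ha0]].
    destruct (level_down lt tau F HF 0 K G b lK HG Hb) as [Eb [HEb Hb0]].
    apply Hl. rewrite (norm_at_0 lt lt_irrefl tau F HF Ea a eq_refl HEa Ha0).
    exact (eq_sym (norm_at_0 lt lt_irrefl tau F HF Eb b eq_refl HEb Hb0)).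
  - pose proof (norm_at_level_lt a K G HG Ha (S l) lK) as Ba.
    pose proof (norm_at_level_lt b K G HG Hb (S l) lK) as Bb.
    assert (Dne : digit a (S l) <> digit b (S l)).
    { cbn [digit]. rewrite (Below l) by lia. intro D.
      apply Hl, (Nat.div_mod_unique (tm tau (S l)) _ _ _ _ Ba Bb D). }
    assert (Below' : forall k, k <= l -> norm_at a k = norm_at b k) by (intros; apply Below; lia).
    destruct (Nat.lt_total (digit a (S l)) (digit b (S l))) as [h|[h|h]]; [|contradiction|].
    + pose proof (code_lt_of_digit_lt a b l Below' Ba Bb h). lra.
    + assert (Below'' : forall k, k <= l -> norm_at b k = norm_at a k)
        by (intros; symmetry; apply Below; lia).
      pose proof (code_lt_of_digit_lt b a l Below'' Bb Ba h). lra.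
Qed.

End Coding.

Section Capturing.
Context {T : Type} (lt : T -> T -> Prop).
Hypothesis lt_irrefl : forall x, ~ lt x x.
Hypothesis lt_trans : forall x y z, lt x y -> lt y z -> lt x z.
Variable F : list T -> Prop.
Hypothesis HF : is_scheme T lt tau F.
Variables (D : nat -> list T) (l : nat).
Hypothesis HD : rtt T lt D (tn tau (S l)) nil.
Hypothesis HDcap : fully_captured T lt tau F D (tn tau (S l)) nil (S l).

Notation lev := (level T tau F).
Notation norm_at := (norm_at lt tau F).
Notation code := (code lt F).
Notation n := (tn tau (S l)).

Lemma captured_index_bound i q x : i < n -> nth_error (D i) q = Some x -> q < length (D 0).
Proof.
  intros Hi Hx. destruct HD as [_ [_ [_ [Hlen _]]]].
  rewrite (Hlen 0 i ltac:(lia) Hi). apply nth_error_Some. rewrite Hx. discriminate.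
Qed.

Lemma captured_Xi i q x : i < n -> nth_error (D i) q = Some x ->
  Xi_is T lt tau F x (S l) (Some i).
Proof.
  intros Hi Hx. destruct HDcap as [_ [_ [HXi _]]].
  apply (HXi i q x Hi (captured_index_bound i q x Hi Hx) Hx). simpl. lia.
Qed.

Lemma captured_norm_bounds i q x : i < n -> nth_error (D i) q = Some x ->
  norm_at x l < tm tau l /\ norm_at x (S l) < tm tau (S l).
Proof.
  intros Hi Hx.
  destruct (Xi_in_level lt tau F HF l x _ (S l) (captured_Xi i q x Hi Hx) (le_n _))
    as [E [HE Hxe]].
  split; apply (norm_at_level_lt lt lt_irrefl lt_trans F HF x (S l) E HE Hxe); lia.
Qed.

Lemma captured_norms_agree i j q x y k : i < n -> j < n ->
  nth_error (D i) q = Some x -> nth_error (D j) q = Some y -> k <= l ->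
  norm_at x k = norm_at y k.
Proof.
  destruct HDcap as [_ [_ [_ HDelta]]].
  assert (Hlt : forall i j x y, i < j -> j < n ->
            nth_error (D i) q = Some x -> nth_error (D j) q = Some y -> k <= l ->
            norm_at x k = norm_at y k).
  { intros i' j' x' y' ij jn Hx Hy Hk.
    apply (norm_at_eq lt tau F).
    apply (proj2 (HDelta i' j' q x' y' ij jn ltac:(simpl; lia)
                    (captured_index_bound j' q y' jn Hy) Hx Hy)).
    lia. }
  intros Hi Hj Hx Hy Hk. destruct (Nat.lt_total i j) as [ij|[<-|ji]].
  - exact (Hlt i j x y ij Hj Hx Hy Hk).
  - rewrite Hx in Hy. injection Hy as <-. reflexivity.
  - symmetry. exact (Hlt j i y x ji Hi Hy Hx Hk).
Qed.

(* Elements of [D 0] stay in one level-[l] set, where the norm is strictly monotone. *)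
Lemma captured_norms_increasing L0 G q1 q2 x1 x2 :
  L0 <= l -> lev L0 G -> incl (D 0) G -> q1 < q2 ->
  nth_error (D 0) q1 = Some x1 -> nth_error (D 0) q2 = Some x2 -> norm_at x1 l < norm_at x2 l.
Proof.
  intros HL HG Inc q12 Hx1 Hx2.
  assert (n0 : 0 < n) by (destruct HD; lia).
  assert (Sorted0 : Sorted lt (D 0)) by (destruct HD as [_ [_ [HS _]]]; exact (HS 0 n0)).
  pose proof (sorted_nth_error_lt lt lt_trans (D 0) Sorted0 q1 q2 x1 x2 q12 Hx1 Hx2) as x12.
  destruct (Xi_in_level lt tau F HF l x2 _ l (captured_Xi 0 q2 x2 n0 Hx2) (le_S _ _ (le_n _)))
    as [E [HE Hx2E]].
  assert (In1 : In x1 (D 0)) by (eapply nth_error_In; eauto).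
  assert (In2 : In x2 (D 0)) by (eapply nth_error_In; eauto).
  assert (Hx1E : In x1 E)
    by (apply (level_initial_segment lt tau F HF L0 l G E x2 x1); auto).
  exact (norm_at_lt lt lt_irrefl lt_trans tau F HF l E x1 x2 HE Hx1E Hx2E x12).
Qed.

(* Members [2u] and [2u + 1] agree below level [S l] and differ there only in
   the oriented block index; the bits of [u] at the norms of the elements of
   [D 0] are chosen to realize the prescribed pattern [b]. *)
Lemma captured_order_pattern L0 G (b : nat -> bool) :
  L0 <= l -> lev L0 G -> incl (D 0) G ->
  exists i j, i < j < n /\
    forall q x y, nth_error (D i) q = Some x -> nth_error (D j) q = Some y ->
      if b q then (code x < code y)%R else (code y < code x)%R.
Proof.
  intros HL HG Inc.
  destruct (testbit_code_exists (tm tau l) (fun p => exists q x,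
              nth_error (D 0) q = Some x /\ norm_at x l = p /\ b q = true)) as [u [Hu Hbits]].
  assert (Hn : n = 2 * 2 ^ tm tau l) by reflexivity.
  exists (2 * u), (2 * u + 1). split; [lia|].
  intros q x y Hx Hy.
  assert (Hq : q < length (D 0)) by exact (captured_index_bound (2 * u) q x ltac:(lia) Hx).
  destruct (nth_error (D 0) q) as [x0|] eqn:Hx0; [|apply nth_error_None in Hx0; lia].
  pose proof (captured_norm_bounds (2 * u) q x ltac:(lia) Hx) as [Bx Bx'].
  pose proof (captured_norm_bounds (2 * u + 1) q y ltac:(lia) Hy) as [_ By'].
  assert (Agree : forall k, k <= l -> norm_at x k = norm_at y k)
    by (intros; apply (captured_norms_agree (2 * u) (2 * u + 1) q); auto; lia).
  assert (Bit : Nat.testbit u (norm_at x l) = b q).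
  { assert (E0 : norm_at x l = norm_at x0 l)
      by (apply (captured_norms_agree (2 * u) 0 q); auto; lia).
    rewrite E0 in Bx |- *.
    destruct (b q) eqn:Hb.
    - apply Hbits; [exact Bx|]. exists q, x0. auto.
    - destruct (Nat.testbit u (norm_at x0 l)) eqn:Ht; [|reflexivity].
      destruct (proj1 (Hbits _ Bx) Ht) as [q' [x' [Hx' [E' Hb']]]].
      destruct (Nat.lt_total q q') as [h|[<-|h]].
      + pose proof (captured_norms_increasing L0 G q q' x0 x' HL HG Inc h Hx0 Hx'). lia.
      + congruence.
      + pose proof (captured_norms_increasing L0 G q' q x' x0 HL HG Inc h Hx' Hx0). lia. }
  pose proof (orient_pair u (norm_at x l) n ltac:(lia)) as Or.
  rewrite Bit in Or.
  pose proof (digit_Xi lt lt_irrefl lt_trans F HF x l _ (captured_Xi (2 * u) q x ltac:(lia) Hx)) as Dx.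
  pose proof (digit_Xi lt lt_irrefl lt_trans F HF y l _ (captured_Xi (2 * u + 1) q y ltac:(lia) Hy)) as Dy.
  rewrite <- (Agree l (le_n l)) in Dy.
  destruct (b q).
  - apply (code_lt_of_digit_lt lt F x y l Agree Bx' By'). rewrite Dx, Dy. nia.
  - apply (code_lt_of_digit_lt lt F y x l); [intros; symmetry; auto | exact By' | exact Bx' |].
    rewrite Dx, Dy. nia.
Qed.

End Capturing.

Section Entangled.
Context {T : Type} (lt : T -> T -> Prop).
Hypothesis lt_irrefl : forall x, ~ lt x x.
Hypothesis lt_trans : forall x y z, lt x y -> lt y z -> lt x z.
Hypothesis lt_total : forall x y, lt x y \/ x = y \/ lt y x.
Hypothesis T_uncountable : ~ countable (fun _ : T => True).
Variable F : list T -> Prop.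
Hypothesis HF : is_scheme T lt tau F.
Hypothesis HFcap : fully_capturing T lt tau F.

Notation lev := (level T tau F).
Notation code := (code lt F).

Definition code_image (x : R) : Prop := exists a, x = code a.

Lemma code_image_uncountable : ~ countable code_image.
Proof.
  intros [f Hf]. apply T_uncountable. exists (fun a => f (code a)). intros x y _ _ H.
  apply (code_inj lt lt_irrefl lt_trans lt_total F HF), Hf; [exists x | exists y |]; auto.
Qed.

Section Family.
Variables (k : nat) (A : list R -> Prop).
Hypothesis HA : forall a, A a -> k_subset code_image k a.
Hypothesis HA_disjoint : forall a b, A a -> A b -> a <> b -> forall x, In x a -> ~ In x b.

Definition lifts (s : list T) (a : list R) : Prop :=
  A a /\ Sorted lt s /\ forall x, In x s <-> In (code x) a.

Definition lifted (s : list T) : Prop := exists a, lifts s a.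

Lemma lifts_exists a : A a -> exists s, lifts s a.
Proof.
  intro Ha. destruct (HA a Ha) as [_ [_ Himg]].
  assert (Pre : exists l, forall x, In x l <-> In (code x) a).
  { clear Ha. induction a as [|r a IH].
    - exists nil. simpl. tauto.
    - destruct (Himg r (or_introl eq_refl)) as [z ->].
      destruct IH as [l Hl]; [intros; apply Himg; simpl; auto|].
      exists (z :: l). intro x. simpl. rewrite Hl. split; [intros [<-|]; auto|].
      intros [E|]; auto. left. exact (code_inj lt lt_irrefl lt_trans lt_total F HF _ _ E). }
  destruct Pre as [l Hl].
  destruct (sorted_exists lt lt_trans lt_total l) as [s [Ss Es]].
  exists s. split; [exact Ha|split; [exact Ss|]]. intro x. rewrite Es. apply Hl.
Qed.

Lemma lifts_meet s a s' a' x : lifts s a -> lifts s' a' -> In x s -> In x s' -> s = s' /\ a = a'.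
Proof.
  intros [Ha [Ss Es]] [Ha' [Ss' Es']] Hx Hx'.
  assert (a = a') as <-.
  { apply NNPP. intro ne. apply (HA_disjoint a a' Ha Ha' ne (code x)); [apply Es|apply Es']; auto. }
  split; [|reflexivity]. apply (sorted_ext lt lt_irrefl lt_trans); auto.
  intro y. rewrite Es, Es'. reflexivity.
Qed.

Lemma lifts_length s a : lifts s a -> length s = k.
Proof.
  intros [Ha [Ss Es]]. destruct (HA a Ha) as [Sa [La Ea]]. rewrite <- La, <- (length_map code s).
  apply (card_is_unique (fun x => In x a)).
  - apply (card_is_ext (fun x => In x (map code s))).
    + intro x. rewrite in_map_iff. split.
      * intros [y [<- Hy]]. apply Es, Hy.
      * intro Hx. destruct (Ea x Hx) as [y ->]. exists y. split; [reflexivity|]. apply Es, Hx.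
    + apply card_is_In, NoDup_map_NoDup_ForallPairs.
      * intros x y _ _. apply (code_inj lt lt_irrefl lt_trans lt_total F HF).
      * apply (sorted_NoDup lt lt_irrefl lt_trans), Ss.
  - apply card_is_In, (sorted_NoDup Rlt Rlt_irrefl Rlt_trans), Sa.
Qed.

Lemma lifted_uncountable : ~ countable A -> ~ countable lifted.
Proof.
  intros NC [f Hf]. apply NC.
  set (lift := fun a => epsilon (inhabits nil) (fun s => lifts s a)).
  assert (Hlift : forall a, A a -> lifts (lift a) a)
    by (intros a Ha; exact (epsilon_spec _ _ (lifts_exists a Ha))).
  exists (fun a => f (lift a)). intros a b Ha Hb E.
  pose proof (Hlift a Ha) as La. pose proof (Hlift b Hb) as Lb.
  assert (Eq : lift a = lift b) by (apply Hf; [exists a | exists b |]; auto).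
  destruct (HA a Ha) as [_ [Len Ea]].
  destruct a as [|r a']; [destruct b as [|r' b']; [reflexivity|] |].
  - destruct (HA _ Hb) as [_ [Lenb _]]. simpl in Len, Lenb. lia.
  - destruct (Ea r (or_introl eq_refl)) as [x Ex].
    assert (Hx : In x (lift (r :: a'))) by (apply (proj2 (proj2 La)); rewrite <- Ex; left; auto).
    refine (proj2 (lifts_meet _ _ _ _ x La Lb Hx _)). rewrite <- Eq. exact Hx.
Qed.

Definition real_of (s : list T) : list R := epsilon (inhabits nil) (lifts s).

Lemma real_of_lifts s : lifted s -> lifts s (real_of s).
Proof. exact (epsilon_spec _ (lifts s)). Qed.

Lemma real_of_inj s s' : 0 < k -> lifted s -> lifted s' -> real_of s = real_of s' -> s = s'.
Proof.
  intros Hk Ls Ls' E. pose proof (real_of_lifts s Ls) as L. pose proof (real_of_lifts s' Ls') as L'.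
  destruct s as [|x s0] eqn:Hs; [pose proof (lifts_length _ _ L); simpl in *; lia|].
  rewrite <- Hs in *.
  assert (Hx : In x s) by (subst s; left; reflexivity).
  apply (lifts_meet s (real_of s) s' (real_of s') x L L' Hx).
  apply (proj2 (proj2 L')). rewrite <- E. apply (proj2 (proj2 L)), Hx.
Qed.

(* Bit [k p + q] of the pattern records whether the [q]-th element of [s]
   (in the order of [T]) has the [p]-th smallest code. *)
Definition order_pattern (s : list T) : nat :=
  epsilon (inhabits 0) (fun c => forall p q, p < k -> q < k ->
    (Nat.testbit c (k * p + q) = true <-> nth_error (real_of s) p = option_map code (nth_error s q))).

Lemma order_pattern_spec s p q : p < k -> q < k ->
  Nat.testbit (order_pattern s) (k * p + q) = true <->
  nth_error (real_of s) p = option_map code (nth_error s q).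
Proof.
  revert p q. apply (epsilon_spec (inhabits 0) (fun c => forall p q, p < k -> q < k ->
    (Nat.testbit c (k * p + q) = true <-> nth_error (real_of s) p = option_map code (nth_error s q)))).
  destruct (testbit_code_exists (k * k) (fun x => exists p q, p < k /\ q < k /\ x = k * p + q /\
      nth_error (real_of s) p = option_map code (nth_error s q))) as [u [_ Hu]].
  exists u. intros p q Hp Hq. rewrite Hu by nia. split.
  - intros [p' [q' [Hp' [Hq' [E H]]]]].
    destruct (Nat.div_mod_unique k p p' q q' Hq Hq' E) as [-> ->]. exact H.
  - intro H. exists p, q. auto.
Qed.

Definition pattern_bit (c : nat) (tt : nat -> bool) (q : nat) : bool :=
  existsb (fun p => andb (Nat.testbit c (k * p + q)) (tt p)) (seq 0 k).

Lemma pattern_bit_spec s tt p q : lifted s -> p < k -> q < k ->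
  Nat.testbit (order_pattern s) (k * p + q) = true -> pattern_bit (order_pattern s) tt q = tt p.
Proof.
  intros Ls Hp Hq Hbit. pose proof (real_of_lifts s Ls) as L.
  assert (Row : forall p', p' < k -> Nat.testbit (order_pattern s) (k * p' + q) = true -> p' = p).
  { intros p' Hp' Hbit'.
    apply order_pattern_spec in Hbit, Hbit'; auto. rewrite <- Hbit in Hbit'.
    destruct L as [Ha _]. destruct (HA _ Ha) as [Sa [La _]].
    apply (proj1 (NoDup_nth_error _) (sorted_NoDup Rlt Rlt_irrefl Rlt_trans _ Sa));
      [rewrite La; exact Hp' | exact Hbit']. }
  unfold pattern_bit. destruct (tt p) eqn:Ht.
  - apply existsb_exists. exists p. rewrite in_seq, Hbit, Ht. split; [lia|reflexivity].
  - apply Bool.not_true_iff_false. rewrite existsb_exists.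
    intros [p' [Hp' H']]. apply in_seq in Hp'. apply Bool.andb_true_iff in H' as [Hb' Ht'].
    rewrite (Row p' ltac:(lia) Hb') in Ht'. congruence.
Qed.

Lemma lifted_pattern_transfer s s' tt : lifted s -> lifted s' ->
  order_pattern s = order_pattern s' ->
  (forall q z w, nth_error s q = Some z -> nth_error s' q = Some w ->
     if pattern_bit (order_pattern s) tt q then (code z < code w)%R else (code w < code z)%R) ->
  forall p x y, p < k -> nth_error (real_of s) p = Some x -> nth_error (real_of s') p = Some y ->
    if tt p then (x < y)%R else (x > y)%R.
Proof.
  intros Ls Ls' Epat Hord p x y Hp Hx Hy.
  pose proof (real_of_lifts s Ls) as L. pose proof (real_of_lifts s' Ls') as L'.
  destruct (HA _ (proj1 L)) as [_ [_ Img]].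
  destruct (Img x (nth_error_In _ _ Hx)) as [z ->].
  assert (Hz : In z s) by (apply (proj2 (proj2 L)), (nth_error_In _ p), Hx).
  destruct (In_nth_error _ _ Hz) as [q Hq].
  assert (Hqk : q < k)
    by (rewrite <- (lifts_length _ _ L); apply nth_error_Some; rewrite Hq; discriminate).
  assert (Bit : Nat.testbit (order_pattern s) (k * p + q) = true)
    by (apply order_pattern_spec; auto; rewrite Hx, Hq; reflexivity).
  pose proof (proj1 (order_pattern_spec s' p q Hp Hqk)) as Hy'. rewrite <- Epat, Hy in Hy'.
  destruct (nth_error s' q) as [w|] eqn:Hw; [|discriminate (Hy' Bit)].
  injection (Hy' Bit) as ->.
  pose proof (Hord q z w Hq Hw) as Ord. rewrite (pattern_bit_spec s tt p q Ls Hp Hqk Bit) in Ord.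
  destruct (tt p); exact Ord.
Qed.

Definition base_level (s : list T) : nat :=
  epsilon (inhabits 0) (fun L => exists G, lev L G /\ incl s G).

Lemma base_level_spec s : exists G, lev (base_level s) G /\ incl s G.
Proof.
  apply (epsilon_spec (inhabits 0) (fun L => exists G, lev L G /\ incl s G)).
  exact (level_cover lt lt_trans lt_total F HF s).
Qed.

Lemma lifted_rtt_root_nil D n R : (forall i, i < n -> lifted (D i)) ->
  (forall i j, i < n -> j < n -> D i = D j -> i = j) -> rtt T lt D n R -> R = nil.
Proof.
  intros HD Dinj Hrtt. destruct R as [|x R']; [reflexivity|]. exfalso.
  pose proof Hrtt as [n2 _].
  pose proof (rtt_root_In lt D n (x :: R') 0 x Hrtt ltac:(lia) (or_introl eq_refl)) as X0.
  pose proof (rtt_root_In lt D n (x :: R') 1 x Hrtt ltac:(lia) (or_introl eq_refl)) as X1.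
  destruct (HD 0 ltac:(lia)) as [a0 L0]. destruct (HD 1 ltac:(lia)) as [a1 L1].
  destruct (lifts_meet _ _ _ _ x L0 L1 X0 X1) as [E _].
  apply Dinj in E; lia.
Qed.

Lemma family_realizes_pattern (tt : nat -> bool) : ~ countable A ->
  exists a b, A a /\ A b /\ a <> b /\
    forall p x y, p < k -> nth_error a p = Some x -> nth_error b p = Some y ->
      if tt p then (x < y)%R else (x > y)%R.
Proof.
  intro NC.
  assert (Hk : 0 < k).
  { destruct k as [|k']; [exfalso|lia]. apply NC. exists (fun _ => 0). intros a b Ha Hb _.
    destruct (HA a Ha) as [_ [La _]], (HA b Hb) as [_ [Lb _]].
    destruct a, b; simpl in *; congruence. }
  destruct (uncountable_fiber lifted base_level (lifted_uncountable NC)) as [L0 NC1].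
  destruct (uncountable_fiber _ order_pattern NC1) as [c0 NC2].
  assert (Pre : forall s, (lifted s /\ base_level s = L0) /\ order_pattern s = c0 ->
                 s <> nil /\ fin_set T lt s).
  { intros s [[[a L] _] _]. split; [|exact (proj1 (proj2 L))].
    intros ->. pose proof (lifts_length _ _ L). simpl in *. lia. }
  destruct (HFcap _ Pre NC2 L0) as [l [Ll [D [R [HD [Dinj [Hrtt Hcap]]]]]]].
  assert (Lifted : forall i, i < tn tau l -> lifted (D i)) by (intros i Hi; apply HD, Hi).
  pose proof (lifted_rtt_root_nil D _ R Lifted Dinj Hrtt) as ->.
  destruct l as [|l]; [lia|].
  assert (n0 : 0 < tn tau (S l)) by (destruct Hrtt; lia).
  destruct (base_level_spec (D 0)) as [G [HG Inc]].
  destruct (HD 0 n0) as [[_ B0] _]. rewrite B0 in HG.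
  destruct (captured_order_pattern lt lt_irrefl lt_trans F HF D l Hrtt Hcap L0 G
              (pattern_bit c0 tt) ltac:(lia) HG Inc) as [i [j [[ij jn] Hord]]].
  destruct (HD i ltac:(lia)) as [_ Pi]. destruct (HD j jn) as [_ Pj].
  exists (real_of (D i)), (real_of (D j)).
  split; [apply (real_of_lifts _ (Lifted i ltac:(lia)))|].
  split; [apply (real_of_lifts _ (Lifted j jn))|].
  split.
  - intro E. apply (real_of_inj _ _ Hk (Lifted i ltac:(lia)) (Lifted j jn)), Dinj in E; lia.
  - apply lifted_pattern_transfer; [apply Lifted; lia | apply Lifted, jn | congruence |].
    rewrite Pi. exact Hord.
Qed.

End Family.

Lemma code_image_entangled : entangled code_image.
Proof.
  split; [exact code_image_uncountable|]. intro k.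
  split; [exact code_image_uncountable|]. intros A HA HAdisj NC tt.
  exact (family_realizes_pattern k A HA HAdisj tt NC).
Qed.

End Entangled.

Theorem mainTheorem14 :
  forall (T : Type) (lt : T -> T -> Prop),
    is_omega1 T lt -> FCA_Delta T lt ->
    exists E : R -> Prop, entangled E.
Proof.
  intros T lt [lt_irrefl [lt_trans [lt_total [_ [T_uncountable _]]]]] FCA.
  destruct (FCA tau tau_type tau_good) as [F [HF HFcap]].
  exact (ex_intro _ _ (code_image_entangled lt lt_irrefl lt_trans lt_total T_uncountable F HF HFcap)).
Qed.
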